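(* Let $p$ be an odd prime, $\alpha>1$ an integer with $\gcd(p,\alpha)=1$, $\gamma=\operatorname{ord}_p(\alpha)$, and let $s,t\geq 0$ be integers. Then $$S_p^1(s\gamma p^t)\leq s\,\theta\left(\frac{p+1}{2}\right)^t .$$
   Context: A base-$p$ digit $d\in\{0,\dots,p-1\}$ is called small if $d<p/2$ and large otherwise. Let $\delta=\{\alpha^j \bmod p : j\in\mathbb{Z}\}$ be the set of residues in $\{0,\dots,p-1\}$ generated by $\alpha$ modulo $p$, and $\theta=\#\{x\in\delta: 0\le x<p/2\}$ the number of small residues in $\delta$. For integers $a,n\ge1$, $S_p^n(a)=\#\{0\le s<a : \text{the base-}p\text{ representation of }\alpha^s\text{ contains fewer than } n \text{ large digits}\}$ (this depends on the fixed $\alpha$). *)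

From mathcomp Require Import all_boot.
Set Implicit Arguments. Unset Strict Implicit. Unset Printing Implicit Defensive.

Definition digit (p n i : nat) : nat := (n %/ p ^ i) %% p.

(* a digit d is large iff d >= p/2, i.e. p <= 2 d *)
Definition large (p d : nat) : bool := p <= d.*2.

(* number of large digits in the base-p representation of n
   (digits of index >= n are all 0 for p >= 2, hence small) *)
Definition nlarge (p n : nat) : nat := \sum_(i < n.+1) large p (digit p n i).

Definition Spn (p alpha n a : nat) : nat :=
  #|[set s : 'I_a | nlarge p (alpha ^ s) < n]|.

(* delta = residues alpha^j mod p; exponents j < p already give all of them
   when gcd(alpha,p)=1 (the order of alpha mod p is at most p-1). *)
Definition delta (p alpha : nat) : {set 'I_p} :=
  [set x : 'I_p | [exists j : 'I_p, val x == alpha ^ j %% p]].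

Definition theta (p alpha : nat) : nat :=
  #|[set x in delta p alpha | ~~ large p (val x)]|.

From mathcomp Require Import all_boot zify.
Set Implicit Arguments. Unset Strict Implicit. Unset Printing Implicit Defensive.

(* Let e_t = v_p(alpha^(gamma p^t) - 1).  Writing alpha^(gamma p^t) = 1 + u p^(e_t) with
   p not dividing u, raising to the p-th power lifts the exponent, so 0 < e_0 < e_1 < ...,
   and the digits of alpha^n below position e_t are periodic in n with period gamma p^t.
   If alpha^n has no large digit, its digits at positions 0, e_0, ..., e_(t-1) are small.
   Within one period gamma, at most theta exponents give a small lowest digit.  Passing
   from period gamma p^t to gamma p^(t+1), the digit of alpha^(r + j gamma p^t) at
   position e_t is affine in j with slope prime to p, so exactly (p+1)/2 of the p
   choices of j keep it small. *)

Lemma eq_modMl_coprime d a m n :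
  coprime d a -> a * m = a * n %[mod d] -> m = n %[mod d].
Proof.
move=> cop_da; wlog le_mn : m n / m <= n => [wlog_le|].
  by case: (leqP m n) => [/wlog_le //|/ltnW/wlog_le le_nm /esym/le_nm].
move=> /eqP; rewrite eq_sym eqn_mod_dvd ?leq_mul2l ?le_mn ?orbT //.
by rewrite -mulnBr Gauss_dvdr // => dvd; apply/eqP; rewrite eq_sym eqn_mod_dvd.
Qed.

Lemma expn_1addn m j : exists k, (1 + m) ^ j = 1 + j * m + k * m ^ 2.
Proof.
elim: j => [|j [k IH]]; first by exists 0; rewrite expn0 !mul0n.
by exists (j + k + k * m); rewrite expnSr IH; nia.
Qed.

Lemma sum_nat_mul_blocks k N (F : nat -> nat) :
  \sum_(0 <= n < k * N) F n = \sum_(0 <= j < k) \sum_(0 <= r < N) F (r + j * N).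
Proof.
rewrite big_nat_mul; apply: eq_bigr => j _.
by rewrite -{1}[j * N]add0n big_addn mulSn addnK.
Qed.

Lemma sum_nat_periodic k N (F : nat -> nat) :
  (forall r j, F (r + j * N) = F r) ->
  \sum_(0 <= n < k * N) F n = k * \sum_(0 <= r < N) F r.
Proof.
move=> Fper; rewrite sum_nat_mul_blocks.
under eq_bigr => j _ do under eq_bigr => r _ do rewrite Fper.
by rewrite sum_nat_const_nat subn0.
Qed.

Lemma sum_nat_of_bool_card n (P : pred nat) :
  \sum_(0 <= i < n) P i = #|[set i : 'I_n | P i]|.
Proof.
rewrite big_mkord -sum1_card [RHS]big_mkcond /=.
by apply: eq_bigr => i _; rewrite inE; case: (P i).
Qed.

Lemma digit_eq_mod p y z k : y = z %[mod p ^ k.+1] -> digit p y k = digit p z k.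
Proof. by rewrite /digit !modn_divl -expnS => ->. Qed.

Lemma digit_small_nlarge0 p y k :
  prime p -> nlarge p y = 0 -> ~~ large p (digit p y k).
Proof.
move=> p_pr nl0; case: (ltnP k y.+1) => [lt_ky|le_yk].
  by move: nl0 => /eqP; rewrite sum_nat_eq0 => /forallP/(_ (Ordinal lt_ky)); case: large.
have y_lt : y < p ^ k by apply: leq_trans (ltn_expl k (prime_gt1 p_pr)); lia.
by rewrite /digit divn_small // mod0n /large leqn0 -lt0n prime_gt0.
Qed.

Lemma sum_small_digits p : odd p -> \sum_(0 <= i < p) ~~ large p i = p.+1 %/ 2.
Proof.
move=> p_odd; have p_eq : p = (p./2).*2.+1 by rewrite -[p in LHS]odd_double_half p_odd.
rewrite (big_cat_nat _ (n := (p./2).+1)) //=; last by lia.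
rewrite (@eq_big_nat _ _ _ 0 _ _ (fun _ => 1)) => [|i /andP[_ hi]]; last first.
  by rewrite /large; have -> : (p <= i.*2) = false by lia.
rewrite (@eq_big_nat _ _ _ _ p _ (fun _ => 0)) => [|i /andP[hi _]]; last first.
  by rewrite /large; have -> : (p <= i.*2) = true by lia.
by rewrite !sum_nat_const_nat; lia.
Qed.

Lemma sum_small_affine p D w : prime p -> odd p -> coprime p w ->
  \sum_(0 <= j < p) ~~ large p ((D + j * w) %% p) = p.+1 %/ 2.
Proof.
move=> p_pr p_odd cop_pw; have p_gt0 := prime_gt0 p_pr.
pose f (j : 'I_p) : 'I_p := Ordinal (ltn_pmod (D + j * w) p_gt0).
have f_inj : injective f.
  move=> i j /(congr1 val) /= /eqP; rewrite eqn_modDl => /eqP.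
  rewrite ![_ * w]mulnC => /(eq_modMl_coprime cop_pw).
  by rewrite !modn_small // => /val_inj.
rewrite -(sum_small_digits p_odd) !big_mkord.
by rewrite (reindex_inj f_inj (P := xpredT) (F := fun j : 'I_p => nat_of_bool (~~ large p j))).
Qed.

Section Lifts.
Variables (p alpha gamma : nat).
Hypotheses (p_pr : prime p) (alpha_gt1 : 1 < alpha) (cop_p_alpha : coprime p alpha)
  (gamma_gt0 : 0 < gamma) (alpha_gamma : alpha ^ gamma = 1 %[mod p]).

Definition lift_power t := alpha ^ (gamma * p ^ t).
Definition lift_val t := logn p (lift_power t - 1).

Local Notation x := lift_power.
Local Notation e := lift_val.

Fixpoint small_at_lifts t n : bool :=
  if t is t'.+1 then small_at_lifts t' n && ~~ large p (digit p (alpha ^ n) (e t'))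
  else ~~ large p (digit p (alpha ^ n) 0).

Lemma lift_power_gt1 t : 1 < x t.
Proof.
by rewrite /lift_power -(exp1n (gamma * p ^ t)) ltn_exp2r ?muln_gt0 ?gamma_gt0 ?expn_gt0 ?prime_gt0.
Qed.

Lemma lift_power_mod1 t : x t = 1 %[mod p].
Proof. by rewrite /lift_power expnM -modnXm alpha_gamma modnXm exp1n. Qed.

Lemma lift_power_decomp t : exists2 u, coprime p u & x t = 1 + u * p ^ e t.
Proof.
have x_gt1 := lift_power_gt1 t.
have [|u cop_pu x_eq] := pfactor_coprime p_pr (n := x t - 1); first lia.
by exists u => //; rewrite /lift_val -x_eq; lia.
Qed.

Lemma lift_val_gt0 t : 0 < e t.
Proof.
have x_gt1 := lift_power_gt1 t.
rewrite /lift_val logn_gt0 mem_primes p_pr subn_gt0 x_gt1 /=.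
by rewrite -eqn_mod_dvd ?lift_power_mod1 //; lia.
Qed.

Lemma lift_val_ltS t : e t < e t.+1.
Proof.
have [u cop_pu x_eq] := lift_power_decomp t.
have [k x_pow] := expn_1addn (u * p ^ e t) p.
have := lift_val_gt0 t; case: (e t) x_eq x_pow => [//|e'] x_eq x_pow _.
have xS_eq : x t.+1 - 1 = (u + k * u ^ 2 * p ^ e') * p ^ e'.+2.
  rewrite /lift_power expnSr mulnA expnM -/(x t) x_eq x_pow !(expnS p) -addnA addKn.
  by set q := p ^ e'; clear; nia.
have xS_gt0 : 0 < x t.+1 - 1 by rewrite subn_gt0 lift_power_gt1.
by rewrite /lift_val -/(x t.+1) -pfactor_dvdn // xS_eq dvdn_mull.
Qed.

Lemma lift_val_mono : {homo e : i t / i < t}.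
Proof. exact: homo_ltn ltn_trans lift_val_ltS. Qed.

Lemma digit_lift_periodic t m n k : k < e t ->
  digit p (alpha ^ (n + m * (gamma * p ^ t))) k = digit p (alpha ^ n) k.
Proof.
move=> lt_ke; apply: digit_eq_mod.
have [u _ x_eq] := lift_power_decomp t.
have dvd_e : p ^ k.+1 %| p ^ e t by rewrite dvdn_exp2l.
have xm_mod : x t ^ m = 1 %[mod p ^ e t] by rewrite -modnXm x_eq addnC modnMDl modnXm exp1n.
rewrite expnD [m * _]mulnC expnM -/(x t) -(modn_dvdm _ dvd_e) -[RHS](modn_dvdm _ dvd_e).
by rewrite -modnMmr xm_mod modnMmr muln1.
Qed.

Lemma small_at_lifts_periodic T t m n : t <= T ->
  small_at_lifts t (n + m * (gamma * p ^ T)) = small_at_lifts t n.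
Proof.
elim: t => [|t IH] le_tT /=; first by rewrite digit_lift_periodic ?lift_val_gt0.
by rewrite IH ?(ltnW le_tT) // digit_lift_periodic // lift_val_mono.
Qed.

Lemma sum_small_next_lift t r : odd p ->
  \sum_(0 <= j < p) ~~ large p (digit p (alpha ^ (r + j * (gamma * p ^ t))) (e t))
  = p.+1 %/ 2.
Proof.
move=> p_odd; have [u cop_pu x_eq] := lift_power_decomp t.
have := lift_val_gt0 t; case: (e t) x_eq => [//|e'] x_eq _.
set a := alpha ^ r; set P := p ^ e'.+1.
have P_gt0 : 0 < P by rewrite expn_gt0 prime_gt0.
have cop_pa : coprime p a by rewrite coprimeXr.
rewrite -(@sum_small_affine p (a %/ P) (u * a)) ?coprimeMr ?cop_pu //.
apply: eq_bigr => j _; congr (nat_of_bool (~~ large p _)).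
have [k x_pow] := expn_1addn (u * P) j.
have pow_eq : alpha ^ (r + j * (gamma * p ^ t))
    = (k * u ^ 2 * a * p ^ e') * p * P + (a %/ P + j * (u * a)) * P + a %% P.
  rewrite expnD [j * _]mulnC expnM -/(x t) -/a x_eq x_pow {1}(divn_eq a P) /P expnSr.
  by set q := p ^ e'; clear; nia.
by rewrite /digit pow_eq -mulnDl divnMDl // (divn_small (ltn_pmod a P_gt0)) addn0 modnMDl.
Qed.

Lemma small_at_lifts_nlarge0 t n : nlarge p (alpha ^ n) = 0 -> small_at_lifts t n.
Proof.
by move=> nl0; elim: t => [|t IH] /=; rewrite ?IH digit_small_nlarge0.
Qed.

Lemma sum_small_at_liftsS t : odd p ->
  \sum_(0 <= r < gamma * p ^ t.+1) small_at_lifts t.+1 r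
  = p.+1 %/ 2 * \sum_(0 <= r < gamma * p ^ t) small_at_lifts t r.
Proof.
move=> p_odd; rewrite expnS mulnCA sum_nat_mul_blocks /= exchange_big big_distrr /=.
apply: eq_bigr => r _; rewrite -(sum_small_next_lift t r p_odd) big_distrl /=.
apply: eq_bigr => j _; rewrite small_at_lifts_periodic //.
by case: (small_at_lifts t r); rewrite ?muln1 ?muln0.
Qed.

Lemma sum_small_at_lifts t : odd p ->
  \sum_(0 <= r < gamma * p ^ t) small_at_lifts t r
  = (p.+1 %/ 2) ^ t * \sum_(0 <= r < gamma) small_at_lifts 0 r.
Proof.
move=> p_odd; elim: t => [|t IH]; first by rewrite expn0 muln1 mul1n.
by rewrite sum_small_at_liftsS // IH expnS mulnA.
Qed.

End Lifts.

Section Order.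
Variables (p alpha gamma : nat).
Hypotheses (p_pr : prime p) (cop_p_alpha : coprime p alpha)
  (gamma_min : forall j, 0 < j < gamma -> alpha ^ j <> 1 %[mod p]).

Lemma order_lt_prime : gamma < p.
Proof.
rewrite ltnNge; apply/negP => le_p_gamma; apply: (gamma_min (j := p.-1)).
  by have := prime_gt1 p_pr; lia.
apply: (@eq_modMl_coprime _ alpha) => //.
by rewrite -expnS prednK ?prime_gt0 // fermat_little // muln1.
Qed.

Lemma expn_mod_order_inj i j :
  i < gamma -> j < gamma -> alpha ^ i = alpha ^ j %[mod p] -> i = j.
Proof.
wlog le_ij : i j / i <= j => [wlog_le|lt_i lt_j eq_ij].
  move=> lt_i lt_j eq_ij; case: (leqP i j) => [le_ij|/ltnW le_ji]; first exact: wlog_le.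
  by symmetry; apply: wlog_le.
apply/eqP; rewrite eqn_leq le_ij leqNgt; apply/negP => lt_ij.
apply: (gamma_min (j := j - i)); first by rewrite subn_gt0 lt_ij (leq_ltn_trans (leq_subr _ _)).
apply: (@eq_modMl_coprime _ (alpha ^ i)); first by rewrite coprimeXr.
by rewrite -expnD subnKC ?muln1 // ltnW.
Qed.

Lemma sum_small_at_lifts0 : \sum_(0 <= r < gamma) small_at_lifts p alpha gamma 0 r <= theta p alpha.
Proof.
have p_gt0 := prime_gt0 p_pr.
pose f (i : 'I_gamma) : 'I_p := Ordinal (ltn_pmod (alpha ^ i) p_gt0).
have f_inj : injective f.
  move=> i j /(congr1 val) /= eq_ij; apply: val_inj.
  exact: expn_mod_order_inj (ltn_ord i) (ltn_ord j) eq_ij.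
rewrite sum_nat_of_bool_card -(card_imset _ f_inj); apply/subset_leq_card/subsetP => y.
case/imsetP => i; rewrite inE /= /digit expn0 divn1 => small_i ->.
rewrite !inE small_i andbT; apply/existsP.
by exists (Ordinal (ltn_trans (ltn_ord i) order_lt_prime)).
Qed.

End Order.

Theorem lemma2p5 (p alpha gamma s t : nat) :
  prime p -> odd p -> 1 < alpha -> coprime p alpha ->
  0 < gamma -> alpha ^ gamma = 1 %[mod p] ->
  (forall j, 0 < j < gamma -> alpha ^ j <> 1 %[mod p]) ->
  Spn p alpha 1 (s * gamma * p ^ t) <= s * theta p alpha * (p.+1 %/ 2) ^ t.
Proof.
move=> p_pr p_odd alpha_gt1 cop_p_alpha gamma_gt0 alpha_gamma gamma_min.
have period_count : \sum_(0 <= r < gamma * p ^ t) small_at_lifts p alpha gamma t r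
    <= theta p alpha * (p.+1 %/ 2) ^ t.
  by rewrite sum_small_at_lifts // mulnC leq_mul2r sum_small_at_lifts0 ?orbT.
rewrite /Spn -mulnA -(sum_nat_of_bool_card _ (fun n => nlarge p (alpha ^ n) < 1)).
apply: (@leq_trans (\sum_(0 <= n < s * (gamma * p ^ t)) small_at_lifts p alpha gamma t n)).
  apply: leq_sum => n _; case: ltnP => //= nlarge_lt1.
  by rewrite small_at_lifts_nlarge0 //; apply/eqP; rewrite -leqn0.
rewrite sum_nat_periodic => [|r j]; last by rewrite small_at_lifts_periodic.
by rewrite -mulnA leq_mul2l period_count orbT.
Qed.
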